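(* Every $4$-dimensional Acaa-algebra over a field $\mathbb K$ of characteristic $0$ is isomorphic to one of the following: (1) the $4$-dimensional abelian algebra; (2) the $4$-dimensional $2$-step nilpotent Lie algebra $\mathcal H_3\oplus\mathbb K$, given in a basis $\{e_1,e_2,e_3,e_4\}$ by $[e_1,e_2]=e_3$ and all other brackets of basis vectors (not determined by anticommutativity) zero.
   Context: An Acaa-algebra over a field $\mathbb K$ of characteristic $0$ is a $\mathbb K$-vector space $A$ with a bilinear product $[\cdot,\cdot]$ which is anticommutative, $[x,y]=-[y,x]$, and satisfies $[x_1,[x_2,x_3]]=[x_2,[x_3,x_1]]$ for all $x_1,x_2,x_3\in A$. Isomorphism means a linear bijection preserving the bracket. *)

From HB Require Import structures.
From mathcomp Require Import all_boot all_order all_algebra.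
Set Implicit Arguments. Unset Strict Implicit. Unset Printing Implicit Defensive.
Import GRing.Theory.
Local Open Scope ring_scope.

Definition is_acaa (K : fieldType) (V : lmodType K) (br : V -> V -> V) : Prop :=
  [/\ (forall (a : K) (x y z : V), br (a *: x + y) z = a *: br x z + br y z),
      (forall (a : K) (x y z : V), br z (a *: x + y) = a *: br z x + br z y),
      (forall x y : V, br x y = - br y x) &
      (forall x1 x2 x3 : V, br x1 (br x2 x3) = br x2 (br x3 x1))].

Definition acaa_iso (K : fieldType) (V W : lmodType K)
  (brV : V -> V -> V) (brW : W -> W -> W) : Prop :=
  exists f : V -> W,
    [/\ (forall (a : K) (x y : V), f (a *: x + y) = a *: f x + f y),
        bijective f &
        (forall x y : V, f (brV x y) = brW (f x) (f y))].

Definition abelian4_br (K : fieldType) (x y : 'rV[K]_4) : 'rV[K]_4 := 0.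

(* H_3 (+) K on K^4 with basis e1..e4 = standard basis (indices 0..3):
   [e1,e2] = e3, all other brackets of basis vectors zero (up to antisymmetry).
   Bilinear extension: [x,y] = (x1 y2 - x2 y1) e3. *)
Definition heis4_br (K : fieldType) (x y : 'rV[K]_4) : 'rV[K]_4 :=
  \row_(k < 4) (if (k : nat) == 2%N
                then x 0 (inord 0) * y 0 (inord 1) - x 0 (inord 1) * y 0 (inord 0)
                else 0).

From HB Require Import structures.
From mathcomp Require Import all_boot all_order all_algebra.
From Stdlib Require Import Classical.
Set Implicit Arguments. Unset Strict Implicit. Unset Printing Implicit Defensive.
Import GRing.Theory.
Local Open Scope ring_scope.

(* In characteristic not 2, [x,[y,z]] is an alternating trilinear form, and
   products of four elements vanish.  If some [x,[y,z]] = v were non-zero,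
   x, y, z, [y,z], v would be linearly independent, which is impossible in
   dimension 4; so the algebra is 2-step nilpotent.  If moreover w = [a,b] is
   non-zero, every vector c commuting with a and b and not on the line K w
   completes a, b, w to a basis in which [a,b] = w is the only non-zero
   product.  Applied to the central vector c = [x,y], this shows that every
   bracket lies on K w; hence any vector outside the span of a, b, w can be
   corrected by multiples of a and b into such a c. *)

Section AcaaIdentities.
Variables (K : fieldType) (V : lmodType K) (br : V -> V -> V).
Hypothesis acaa : is_acaa br.

Lemma acaa_linearl z : linear (br^~ z).
Proof. by case: acaa => linl _ _ _ k x y; apply: linl. Qed.
Lemma acaa_linearr z : linear (br z).
Proof. by case: acaa => _ linr _ _ k x y; apply: linr. Qed.

Let brl (z : V) : {linear V -> V} :=
  HB.pack (br^~ z) (GRing.isLinear.Build K V V *:%R _ (acaa_linearl z)).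
Let brr (z : V) : {linear V -> V} :=
  HB.pack (br z) (GRing.isLinear.Build K V V *:%R _ (acaa_linearr z)).

Lemma acaa_br0r z : br z 0 = 0. Proof. exact: linear0 (brr z). Qed.
Lemma acaa_brDl x y z : br (x + y) z = br x z + br y z.
Proof. exact: (linearD (brl z) x y). Qed.
Lemma acaa_brDr x y z : br z (x + y) = br z x + br z y.
Proof. exact: (linearD (brr z) x y). Qed.
Lemma acaa_brZl k x z : br (k *: x) z = k *: br x z.
Proof. exact: (linearZZ (brl z) k x). Qed.
Lemma acaa_brZr k x z : br z (k *: x) = k *: br z x.
Proof. exact: (linearZZ (brr z) k x). Qed.
Lemma acaa_brNr x z : br z (- x) = - br z x.
Proof. exact: (linearN (brr z) x). Qed.
Lemma acaa_brBr x y z : br z (x - y) = br z x - br z y.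
Proof. exact: (linearB (brr z) x y). Qed.

Lemma acaa_brC x y : br x y = - br y x. Proof. by case: acaa. Qed.
Lemma acaa_cycle x y z : br x (br y z) = br y (br z x). Proof. by case: acaa. Qed.

Lemma acaa_brA_swap x y z : br x (br y z) = - br y (br x z).
Proof. by rewrite acaa_cycle (acaa_brC z x) acaa_brNr. Qed.

Hypothesis two_neq0 : (2%:R : K) != 0.

Lemma eq_opp_eq0 (v : V) : v = - v -> v = 0.
Proof.
move=> vN; apply/eqP.
have : (2%:R : K) *: v == 0 by rewrite scaler_nat mulr2n {1}vN addNr.
by rewrite scaler_eq0 (negPf two_neq0).
Qed.

Lemma acaa_brxx x : br x x = 0.
Proof. exact/eq_opp_eq0/acaa_brC. Qed.

Lemma acaa_br_xxy x y : br x (br x y) = 0.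
Proof. exact/eq_opp_eq0/acaa_brA_swap. Qed.

Lemma acaa_br_xyx x y : br x (br y x) = 0.
Proof. by rewrite (acaa_brC y x) acaa_brNr acaa_br_xxy oppr0. Qed.

Lemma acaa_br4_eq0 x y z t : br x (br y (br z t)) = 0.
Proof.
apply: eq_opp_eq0.
have swap_pairs p q u : br p (br q u) = br u (br p q).
  by rewrite (acaa_cycle p) (acaa_cycle q).
have opp_swap : br x (br y (br z t)) = - br z (br t (br x y)).
  by rewrite swap_pairs acaa_brC -(swap_pairs z t).
have swap_back : br z (br t (br x y)) = br x (br y (br z t)).
  rewrite (acaa_brA_swap z t) (acaa_cycle z x y) (acaa_brA_swap t x) opprK.
  by rewrite (acaa_cycle t y z).
by rewrite {1}opp_swap swap_back.
Qed.

End AcaaIdentities.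

Section FreeFamilies.
Variables (K : fieldType) (V : vectType K).

Lemma free_cons_annihilated (W : lmodType K) (f : V -> W) (x : V) (X : seq V) :
  linear f -> f x != 0 -> {in X, forall y, f y = 0} -> free X -> free (x :: X).
Proof.
move=> linf fx_neq0 fX0 freeX; rewrite free_cons freeX andbT.
pose fl : {linear V -> W} := HB.pack f (GRing.isLinear.Build K V W *:%R f linf).
apply: contra fx_neq0 => /(@coord_span _ _ _ (in_tuple X)) ->.
rewrite [f _](linear_sum fl) big1 // => i _.
by rewrite linearZZ [fl _]fX0 ?scaler0 // mem_nth.
Qed.

Lemma exists_notin_span (X : seq V) :
  (size X < \dim (fullv : {vspace V}))%N -> exists t, t \notin <<X>>%VS.
Proof.
move=> ltX; suff /hasP[t _ tX] : has (fun t => t \notin <<X>>%VS) (vbasis fullv).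
  by exists t.
apply: contraLR ltX => /hasPn inX; rewrite -leqNgt.
have : (fullv <= <<X>>)%VS.
  rewrite -(span_basis (vbasisP fullv)); apply/span_subvP => t /inX.
  by rewrite negbK.
by move/dimvS/leq_trans; apply; apply: dim_span.
Qed.

Lemma free_basis_full n (X : n.-tuple V) :
  \dim (fullv : {vspace V}) = n -> free X -> basis_of fullv X.
Proof.
by move=> dimV freeX; rewrite basisEfree freeX subvf size_tuple dimV /=.
Qed.

Definition comb n (X : n.-tuple V) (r : 'rV[K]_n) : V := \sum_i r 0 i *: X`_i.

Lemma comb_coord n (X : n.-tuple V) v :
  basis_of fullv X -> v = comb X (\row_i coord X i v).
Proof.
move=> basisX; rewrite /comb {1}(coord_basis basisX (memvf v)).
by apply: eq_bigr => i _; rewrite mxE.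
Qed.

Lemma comb4E (x0 x1 x2 x3 : V) (r : 'rV[K]_4) :
  comb [tuple x0; x1; x2; x3] r =
  r 0 (inord 0) *: x0 + r 0 (inord 1) *: x1 + r 0 (inord 2) *: x2
    + r 0 (inord 3) *: x3.
Proof.
rewrite /comb !big_ord_recl big_ord0 /= addr0 !addrA.
by congr (_ *: _ + _ *: _ + _ *: _ + _ *: _); congr (r 0 _); apply: val_inj;
  rewrite /= inordK.
Qed.

Lemma acaa_iso_of_basis n (X : n.-tuple V) (br : V -> V -> V)
    (brW : 'rV[K]_n -> 'rV[K]_n -> 'rV[K]_n) :
  basis_of fullv X ->
  (forall r s, br (comb X r) (comb X s) = comb X (brW r s)) ->
  acaa_iso br brW.
Proof.
move=> basisX br_comb; pose f (v : V) : 'rV[K]_n := \row_i coord X i v.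
have combK : cancel (comb X) f.
  move=> r; apply/rowP => i; rewrite mxE.
  exact: (coord_sum_free (r 0) i (basis_free basisX)).
have fK : cancel f (comb X) by move=> v; rewrite -comb_coord.
exists f; split.
- by move=> k u v; apply/rowP => i; rewrite !mxE linearP.
- by exists (comb X).
- by move=> u v; rewrite -{1}(fK u) -{1}(fK v) br_comb combK.
Qed.

End FreeFamilies.

Definition heis4_coef (K : fieldType) (r s : 'rV[K]_4) : K :=
  r 0 (inord 0) * s 0 (inord 1) - r 0 (inord 1) * s 0 (inord 0).

Lemma comb_heis4 (K : fieldType) (V : vectType K) (x0 x1 x2 x3 : V) r s :
  comb [tuple x0; x1; x2; x3] (heis4_br r s) = heis4_coef r s *: x2.
Proof.
by rewrite comb4E /heis4_br !mxE !inordK //= !scale0r !add0r addr0.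
Qed.

Lemma acaa_nil2 (K : fieldType) (V : vectType K) (br : V -> V -> V) :
  is_acaa br -> (2%:R : K) != 0 -> (\dim (fullv : {vspace V}) <= 4)%N ->
  forall x y z, br x (br y z) = 0.
Proof.
move=> acaa two_neq0 dimV x y z; apply/eqP/negPn/negP => v_neq0.
have br4 := acaa_br4_eq0 acaa two_neq0; have xx := acaa_brxx acaa two_neq0.
have xxy := acaa_br_xxy acaa two_neq0; have xyx := acaa_br_xyx acaa two_neq0.
have br0r := acaa_br0r acaa; have brC := acaa_brC acaa.
have lin := (acaa_brDl acaa, acaa_brDr acaa, acaa_brZl acaa, acaa_brZr acaa).
have freeX : free [:: x; y; z; br y z; br x (br y z)].
  apply: (free_cons_annihilated (acaa_linearl acaa (br y z))) => //.
    move=> t; rewrite !inE => /or4P[] /eqP->; rewrite ?xxy ?xyx ?xx //.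
    by rewrite (acaa_cycle acaa) br4.
  apply: (free_cons_annihilated (f := fun t => br x (br t z))) => //.
  - by move=> k s t; rewrite !lin.
  - move=> t; rewrite !inE => /or3P[] /eqP->;
      by rewrite ?xx ?br0r // (brC _ z) (acaa_brNr acaa) br4 oppr0.
  apply: (free_cons_annihilated (f := fun t => br x (br y t))) => //.
  - by move=> k s t; rewrite !lin.
  - by move=> t; rewrite !inE => /orP[] /eqP->; rewrite ?xxy ?br0r ?br4.
  apply: (free_cons_annihilated (acaa_linearr acaa x)) => //.
    by move=> t; rewrite inE => /eqP->; rewrite xxy.
  by rewrite seq1_free.
have := dimvS (subvf <<[:: x; y; z; br y z; br x (br y z)]>>).
by rewrite (eqnP freeX) => /leq_trans/(_ dimV).
Qed.

Section Heisenberg.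
Variables (K : fieldType) (V : vectType K) (br : V -> V -> V).
Hypotheses (acaa : is_acaa br) (two_neq0 : (2%:R : K) != 0).
Hypothesis dimV : \dim (fullv : {vspace V}) = 4%N.
Hypothesis nil2 : forall x y z, br x (br y z) = 0.
Variables a b : V.
Hypothesis ab_neq0 : br a b != 0.
Local Notation w := (br a b).

Lemma free_central_ext c :
  br a c = 0 -> br b c = 0 -> c \notin <[w]>%VS -> free [:: a; b; w; c].
Proof.
move=> ac bc c_notin.
have xx := acaa_brxx acaa two_neq0.
have centr x y : br x y = 0 -> br y x = 0.
  by move=> xy; rewrite (acaa_brC acaa) xy oppr0.
rewrite (perm_free (_ : perm_eq _ [:: a; b; c; w])); last first.
  by rewrite !perm_cons (perm_catC [:: w] [:: c]).
apply: (free_cons_annihilated (acaa_linearl acaa b)) => //.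
  by move=> t; rewrite !inE => /or3P[] /eqP->; rewrite ?xx // centr ?nil2.
apply: (free_cons_annihilated (acaa_linearr acaa a)) => //.
  by move=> t; rewrite !inE => /orP[] /eqP->.
by rewrite free_cons span_seq1 c_notin seq1_free.
Qed.

Lemma br_comb_central c : br a c = 0 -> br b c = 0 -> forall r s,
  br (comb [tuple a; b; w; c] r) (comb [tuple a; b; w; c] s)
  = heis4_coef r s *: w.
Proof.
move=> ac bc r s.
have xx := acaa_brxx acaa two_neq0.
have ca : br c a = 0 by rewrite (acaa_brC acaa) ac oppr0.
have cb : br c b = 0 by rewrite (acaa_brC acaa) bc oppr0.
have wl x : br w x = 0 by rewrite (acaa_brC acaa) nil2 oppr0.
have lin := (acaa_brDl acaa, acaa_brDr acaa, acaa_brZl acaa, acaa_brZr acaa).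
rewrite !comb4E !lin !xx !wl !nil2 ac bc ca cb (acaa_brC acaa b a).
by rewrite !scaler0 !addr0 !add0r !scalerN !scalerA -scalerBl.
Qed.

Lemma acaa_derived_line x y : br x y \in <[w]>%VS.
Proof.
set p := br x y; apply/negPn/negP => p_notin.
have [ap bp] : br a p = 0 /\ br b p = 0 by split; apply: nil2.
have basisX : basis_of fullv [tuple a; b; w; p].
  exact/free_basis_full/free_central_ext.
move: p_notin; rewrite /p (comb_coord x basisX) (comb_coord y basisX).
by rewrite (br_comb_central ap bp) memvZ ?memv_line.
Qed.

Lemma exists_central_complement :
  exists c, [/\ br a c = 0, br b c = 0 & c \notin <[w]>%VS].
Proof.
have [|t t_notin] := @exists_notin_span _ _ [:: a; b; w]; first by rewrite dimV.
have [l1 at_eq] := vlineP _ _ (acaa_derived_line a t).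
have [l2 bt_eq] := vlineP _ _ (acaa_derived_line b t).
have xx := acaa_brxx acaa two_neq0.
exists (t + l2 *: a - l1 *: b); split.
- rewrite (acaa_brBr acaa) (acaa_brDr acaa) !(acaa_brZr acaa) at_eq xx.
  by rewrite scaler0 addr0 subrr.
- rewrite (acaa_brBr acaa) (acaa_brDr acaa) !(acaa_brZr acaa) bt_eq xx.
  by rewrite (acaa_brC acaa b a) scaler0 subr0 scalerN subrr.
apply: contra t_notin => /vlineP[k c_eq].
have -> : t = k *: w + l1 *: b - l2 *: a by rewrite -c_eq subrK addrK.
by rewrite rpredB ?rpredD ?rpredZ // memv_span // !inE eqxx ?orbT.
Qed.

Lemma acaa_heis4_iso : acaa_iso br (@heis4_br K).
Proof.
have [c [ac bc c_notin]] := exists_central_complement.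
apply: (acaa_iso_of_basis (X := [tuple a; b; w; c])).
  exact/free_basis_full/free_central_ext.
by move=> r s; rewrite br_comb_central // comb_heis4.
Qed.

End Heisenberg.

Lemma abelian4_iso (K : fieldType) (V : vectType K) (br : V -> V -> V) :
  \dim (fullv : {vspace V}) = 4%N -> (forall x y, br x y = 0) ->
  acaa_iso br (@abelian4_br K).
Proof.
move=> dimV br0; apply: (acaa_iso_of_basis (X := tcast dimV (vbasis fullv))).
  by rewrite val_tcast; apply: vbasisP.
by move=> r s; rewrite br0 /comb big1 // => i _; rewrite mxE scale0r.
Qed.

Theorem mainTheorem4 (K : fieldType) (V : vectType K)
  (br : V -> V -> V) :
  [pchar K] =i pred0 ->
  (\dim (fullv : {vspace V}) = 4)%N ->
  is_acaa br ->
  acaa_iso br (@abelian4_br K) \/ acaa_iso br (@heis4_br K).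
Proof.
move=> char0 dimV acaa.
have two_neq0 : (2%:R : K) != 0 by have := char0 2; rewrite !inE /= => ->.
have nil2 := acaa_nil2 acaa two_neq0 (eq_leq dimV).
have [[a [b ab_neq0]] | abelian] := classic (exists a b, br a b != 0).
  by right; apply: acaa_heis4_iso ab_neq0.
left; apply: abelian4_iso dimV _ => a b.
by apply/eqP/negPn/negP => ab_neq0; apply: abelian; exists a, b.
Qed.
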